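(* Let $\Theta=\{1,2\}$, let $(A,u)$ be a decision problem with $|A|=2$, and let $P_1,\dots,P_m$ be experiments with Blackwell supremum $\overline P$. Then $$V(P_1,\dots,P_m;(A,u))=V(\overline P;(A,u))=\max_{j=1,\dots,m}V(P_j;(A,u)).$$
   Context: $\Theta$ is a finite set of states. A decision problem is a pair $(A,u)$ with $A$ a finite nonempty action set and $u:\Theta\times A\to\mathbb{R}$; for $\alpha\in\Delta(A)$ write $u(\theta,\alpha)=\sum_a\alpha(a)u(\theta,a)$. An experiment is a map $P:\Theta\to\Delta(Y)$ with $Y$ a finite signal set. Given experiments $P_j:\Theta\to\Delta(Y_j)$, $j=1,\dots,m$, let $\mathbf Y=Y_1\times\cdots\times Y_m$ and let $\mathcal P(P_1,\dots,P_m)$ be the set of experiments $P:\Theta\to\Delta(\mathbf Y)$ whose $j$-th marginal is $P_j(\cdot|\theta)$ for every $\theta$ and $j$. A strategy is a map $\sigma:\mathbf Y\to\Delta(A)$. Define $V(P_1,\dots,P_m;(A,u))=\max_{\sigma}\min_{P\in\mathcal P(P_1,\dots,P_m)}\sum_{\theta}\sum_{\mathbf y\in\mathbf Y}P(\mathbf y|\theta)u(\theta,\sigma(\mathbf y))$; for $m=1$ this is the usual value $V(P;(A,u))=\max_{\sigma:Y\to\Delta(A)}\sum_\theta\sum_y P(y|\theta)u(\theta,\sigma(y))$. An experiment $P$ is more informative than $Q$ if $V(P;(A,u))\ge V(Q;(A,u))$ for every decision problem. $R$ is a Blackwell supremum of $P_1,\dots,P_m$ if $R$ is more informative than each $P_j$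 and every $S$ more informative than all $P_j$ is more informative than $R$ (such a supremum exists when $|\Theta|=2$). *)

From HB Require Import structures.
From mathcomp Require Import all_boot all_order all_algebra.
From mathcomp Require Import classical_sets boolp reals.
Set Implicit Arguments. Unset Strict Implicit. Unset Printing Implicit Defensive.
Import Order.TTheory GRing.Theory Num.Theory.
Local Open Scope ring_scope.
Local Open Scope classical_set_scope.

Section Blackwell.
Variable R : realType.

Definition is_dist (T : finType) (p : T -> R) : Prop :=
  (forall t, 0 <= p t) /\ \sum_(t : T) p t = 1.

(** An experiment [P : Theta -> Delta(Y)], written as [P theta y = P(y|theta)]. *)
Definition experiment (Theta Y : finType) (P : Theta -> Y -> R) : Prop :=
  forall th, is_dist (P th).

Definition strategy (Y A : finType) (sigma : Y -> A -> R) : Prop :=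
  forall y, is_dist (sigma y).

Definition mixed_u (Theta A : finType) (u : Theta -> A -> R) (th : Theta)
  (alpha : A -> R) : R := \sum_(a : A) alpha a * u th a.

Definition payoff (Theta Y A : finType) (P : Theta -> Y -> R)
  (u : Theta -> A -> R) (sigma : Y -> A -> R) : R :=
  \sum_(th : Theta) \sum_(y : Y) P th y * mixed_u u th (sigma y).

(** Single-experiment value V(P;(A,u)) = max over strategies (written as sup;
    the max is attained). *)
Definition value (Theta Y A : finType) (P : Theta -> Y -> R)
  (u : Theta -> A -> R) : R :=
  sup [set v | exists sigma : Y -> A -> R, strategy sigma /\ v = payoff P u sigma].

Definition prodY (m : nat) (Y : 'I_m -> finType) : finType :=
  {dffun forall j : 'I_m, Y j}.

Definition coupling (Theta : finType) (m : nat) (Y : 'I_m -> finType)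
  (P : forall j : 'I_m, Theta -> Y j -> R) (Q : Theta -> prodY Y -> R) : Prop :=
  experiment Q /\
  forall th (j : 'I_m) (y : Y j),
    \sum_(yy : prodY Y | yy j == y) Q th yy = P j th y.

Definition value_multi (Theta A : finType) (m : nat) (Y : 'I_m -> finType)
  (P : forall j : 'I_m, Theta -> Y j -> R) (u : Theta -> A -> R) : R :=
  sup [set v | exists sigma : prodY Y -> A -> R, strategy sigma /\
        v = inf [set w | exists Q : Theta -> prodY Y -> R,
                   coupling P Q /\ w = payoff Q u sigma]].

Definition more_informative (Theta Y1 Y2 : finType) (P : Theta -> Y1 -> R)
  (Q : Theta -> Y2 -> R) : Prop :=
  forall (A : finType) (u : Theta -> A -> R), (0 < #|A|)%N ->
    value Q u <= value P u.

Definition blackwell_sup (Theta Z : finType) (Rb : Theta -> Z -> R) (m : nat)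
  (Y : 'I_m -> finType) (P : forall j : 'I_m, Theta -> Y j -> R) : Prop :=
  (forall j, more_informative Rb (P j)) /\
  forall (W : finType) (S : Theta -> W -> R), experiment S ->
    (forall j, more_informative S (P j)) -> more_informative S Rb.

End Blackwell.

From HB Require Import structures.
From mathcomp Require Import all_boot all_order all_algebra.
From mathcomp Require Import classical_sets boolp reals.
From mathcomp Require Import ring lra.
Set Implicit Arguments. Unset Strict Implicit. Unset Printing Implicit Defensive.
Import Order.TTheory GRing.Theory Num.Theory.
Local Open Scope ring_scope.
Local Open Scope classical_set_scope.

(** With actions {a0, a1} the value of an experiment E is
      V(E) = sum_th u(th,a1) + sum_y max(0, sum_th d(th) E(y|th)),
    where d(th) = u(th,a0) - u(th,a1)  ([value_two_actions]).  If d has a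
    constant sign the second term does not depend on E.  Otherwise, writing
    w = |d| > 0 and {a, b} = {1, 2}, the second term is the "disagreement"
    sum_y max(0, w_a E_a(y) - w_b E_b(y)) = w_a - sum_y min(w_a E_a, w_b E_b).
    The heart of the proof is a coupling Q of P_1, ..., P_m whose
    disagreement is at most the smallest disagreement of the P_j
    ([balanced_coupling_disagreement]); it is built from products of
    measures of equal mass ([prod_measure]).  Hence some coupling Q has
    V(Q) <= max_j V(P_j) ([coupling_value_le]).  Since every coupling is more
    informative than each P_j ([coupling_more_informative]), the supremum
    Pbar satisfies max_j V(P_j) <= V(Pbar) <= V(Q); and the robust value of
    the family equals V(P_j) as soon as some coupling is no better than P_j
    ([value_multi_eq]). *)

Section ProductMeasure.
Variable R : realType.
Variables (m : nat) (Y : 'I_m -> finType).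

Lemma sum_prod_factor (h : forall k : 'I_m, Y k -> R) :
  \sum_(f : prodY Y) \prod_k h k (f k) = \prod_k \sum_(s : Y k) h k s.
Proof.
rewrite (reindex (@dffun_of_fprod _ Y)); last exact/onW_bij/dffun_of_fprod_bij.
transitivity (\sum_(t : fprod Y) \prod_(k in 'I_m) [ffun s => h k s] (t k)).
  by apply: eq_bigr => t _; apply: eq_bigr => k _; rewrite !ffunE.
rewrite big_fprod /= -(bigA_distr_big_dep
  (fun i => tagged_with (fun x : 'I_m => Y x) i)
  (fun i j => untag 0 [ffun s => h i s] j)).
apply: eq_bigr => k _; rewrite (big_tag h k); apply: eq_bigr => x _.
by rewrite /untag; case: eqP => // e; rewrite ffunE.
Qed.

Lemma sum_prod_marginal (h : forall k : 'I_m, Y k -> R) (j : 'I_m) (t : Y j) :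
  \sum_(f : prodY Y | f j == t) \prod_k h k (f k) =
  h j t * \prod_(k | k != j) \sum_(s : Y k) h k s.
Proof.
pose h' := @dfwith _ (fun k => Y k -> R) h j (fun s => h j s * (s == t)%:R).
have h'_out k : k != j -> h' k = h k by move=> kj; rewrite /h' dfwith_out // eq_sym.
transitivity (\sum_(f : prodY Y) \prod_k h' k (f k)).
  rewrite big_mkcond; apply: eq_bigr => f _.
  rewrite (bigD1 j) //= [RHS](bigD1 j) //= /h' dfwith_in -/h'.
  rewrite [X in _ = _ * X](eq_bigr (fun k => h k (f k))); last first.
    by move=> k /h'_out ->.
  by case: eqP => _; rewrite ?mulr1 ?mulr0 ?mul0r.
rewrite sum_prod_factor (bigD1 j) //= /h' dfwith_in -/h'.
rewrite (bigD1 t) //= eqxx mulr1 big1 ?addr0; last first.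
  by move=> s /negbTE ->; rewrite mulr0.
by congr (_ * _); apply: eq_bigr => k /h'_out ->.
Qed.

Definition prod_measure (c : R) (f : forall k, Y k -> R) (yy : prodY Y) : R :=
  c * \prod_k (f k (yy k) / c).

Section CommonMass.
Variables (c : R) (f : forall k, Y k -> R).
Arguments f : clear implicits.
Hypotheses (c_ge0 : 0 <= c) (f_ge0 : forall k s, 0 <= f k s).
Hypothesis f_mass : forall k, \sum_s f k s = c.

Lemma prod_measure_ge0 yy : 0 <= prod_measure c f yy.
Proof.
by rewrite /prod_measure mulr_ge0 //; apply: prodr_ge0 => k _; rewrite divr_ge0.
Qed.

Lemma prod_measure_marginal j t :
  \sum_(yy : prodY Y | yy j == t) prod_measure c f yy = f j t.
Proof.
rewrite /prod_measure -big_distrr /= (sum_prod_marginal (fun k s => f k s / c)).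
have [c0|cn0] := eqVneq c 0.
  rewrite c0 !mul0r; have := f_mass j; rewrite c0.
  by move/(psumr_eq0P (fun s _ => f_ge0 s)) => ->.
rewrite big1 ?mulr1; first by rewrite mulrC divfK.
by move=> k _; rewrite -mulr_suml f_mass divff.
Qed.

Lemma prod_measure_mass : \sum_yy prod_measure c f yy = c.
Proof.
rewrite /prod_measure -big_distrr /= (sum_prod_factor (fun k s => f k s / c)).
have [->|cn0] := eqVneq c 0; first by rewrite mul0r.
by rewrite big1 ?mulr1 // => k _; rewrite -mulr_suml f_mass divff.
Qed.

End CommonMass.
End ProductMeasure.

Section Values.
Variable R : realType.

Lemma sup_attained (E : set R) x : E x -> ubound E x -> sup E = x.
Proof.
move=> Ex ub; apply/le_anti/andP; split; first by apply: ge_sup => //; exists x.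
by apply: ub_le_sup => //; exists x.
Qed.

Lemma inf_attained (E : set R) x : E x -> lbound E x -> inf E = x.
Proof.
move=> Ex lb; apply/le_anti/andP; split; last by apply: lb_le_inf => //; exists x.
by apply: ge_inf => //; exists x.
Qed.

Lemma dist_le1 (T : finType) (p : T -> R) t : is_dist p -> p t <= 1.
Proof. by case=> p0 <-; rewrite (bigD1 t) //= lerDl sumr_ge0. Qed.

Variables (Th A : finType) (u : Th -> A -> R).

(** A uniform bound on payoffs, making all sups and infs below finite. *)
Definition payoff_bound : R := \sum_th \sum_a `|u th a|.

Lemma norm_payoff_le (Y : finType) (P : Th -> Y -> R) sigma :
  experiment P -> strategy sigma -> `|payoff P u sigma| <= payoff_bound.
Proof.
move=> hP hs; apply: (le_trans (ler_norm_sum _ _ _)); apply: ler_sum => th _.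
rewrite -[leRHS]mul1r -(proj2 (hP th)) mulr_suml.
apply: (le_trans (ler_norm_sum _ _ _)); apply: ler_sum => y _.
rewrite normrM ger0_norm; last exact: (proj1 (hP th)).
apply: ler_wpM2l; first exact: (proj1 (hP th)).
apply: (le_trans (ler_norm_sum _ _ _)); apply: ler_sum => a _.
rewrite normrM ger0_norm; last exact: (proj1 (hs y)).
by rewrite -[leRHS]mul1r ler_wpM2r // dist_le1.
Qed.

Lemma payoff_le_value (Y : finType) (P : Th -> Y -> R) sigma :
  experiment P -> strategy sigma -> payoff P u sigma <= value P u.
Proof.
move=> hP hs; apply: ub_le_sup; last by exists sigma.
exists payoff_bound => _ [s [hs' ->]].
exact: le_trans (ler_norm _) (norm_payoff_le hP hs').
Qed.

Lemma exists_strategy (Y : finType) : (0 < #|A|)%N ->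
  exists sigma : Y -> A -> R, strategy sigma.
Proof.
case/card_gt0P => a _; exists (fun _ b => (b == a)%:R) => y.
split=> [b|]; first by rewrite ler0n.
by rewrite (bigD1 a) //= eqxx big1 ?addr0 // => b /negbTE ->.
Qed.

Lemma value_le (Y : finType) (P : Th -> Y -> R) B : (0 < #|A|)%N ->
  (forall sigma, strategy sigma -> payoff P u sigma <= B) -> value P u <= B.
Proof.
move=> hA hB; apply: ge_sup => [|_ [s [hs ->]]]; last exact: hB.
by have [s hs] := exists_strategy Y hA; exists (payoff P u s), s.
Qed.

End Values.

Section Couplings.
Variable R : realType.
Variables (Th : finType) (m : nat) (Y : 'I_m -> finType).
Variable P : forall j : 'I_m, Th -> Y j -> R.
Arguments P : clear implicits.

Lemma payoff_lift (Q : Th -> prodY Y -> R) (A : finType) (u : Th -> A -> R)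
   (j : 'I_m) (sigma : Y j -> A -> R) : coupling P Q ->
  payoff Q u (fun yy : prodY Y => sigma (yy j)) = payoff (P j) u sigma.
Proof.
move=> [_ hmarg]; apply: eq_bigr => th _.
rewrite (partition_big (fun yy : prodY Y => yy j) predT) //=.
by apply: eq_bigr => t _; rewrite -hmarg mulr_suml; apply: eq_bigr => yy /eqP ->.
Qed.

Lemma coupling_more_informative (Q : Th -> prodY Y -> R) j :
  coupling P Q -> more_informative Q (P j).
Proof.
move=> hQ A u hA; apply: value_le => // s hs.
rewrite -(payoff_lift u s hQ); apply: payoff_le_value; first exact: hQ.1.
by move=> y; apply: hs.
Qed.

Variables (A : finType) (u : Th -> A -> R).

Definition guaranteed (sigma : prodY Y -> A -> R) : R :=
  inf [set w | exists Q : Th -> prodY Y -> R, coupling P Q /\ w = payoff Q u sigma].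

Lemma value_multiE :
  value_multi P u = sup [set v | exists sigma, strategy sigma /\ v = guaranteed sigma].
Proof. by []. Qed.

(** The guaranteed payoff is at most the payoff against any coupling; the
    infimum is finite thanks to [payoff_bound]. *)
Lemma guaranteed_le (Q : Th -> prodY Y -> R) sigma : coupling P Q ->
  strategy sigma -> guaranteed sigma <= payoff Q u sigma.
Proof.
move=> hQ hs; apply: ge_inf; last by exists Q.
exists (- payoff_bound u) => _ [Q' [hQ' ->]].
by have := norm_payoff_le u hQ'.1 hs; rewrite ler_norml => /andP[].
Qed.

Lemma value_multi_eq (Q : Th -> prodY Y -> R) j : (0 < #|A|)%N ->
  experiment (P j) -> coupling P Q -> value Q u <= value (P j) u ->
  value_multi P u = value (P j) u.
Proof.
move=> hA hPj hQ hQj.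
have guaranteed_le_value s : strategy s -> guaranteed s <= value (P j) u.
  move=> hs; apply: le_trans (guaranteed_le hQ hs) (le_trans _ hQj).
  exact: payoff_le_value hQ.1 hs.
apply/le_anti/andP; split.
  rewrite value_multiE; apply: ge_sup => [|_ [s [hs ->]]].
    by have [s hs] := exists_strategy R (prodY Y) hA; exists (guaranteed s), s.
  exact: guaranteed_le_value.
apply: value_le => // s hs.
pose ls := fun yy : prodY Y => s (yy j).
have hls : strategy ls by move=> yy; exact: hs.
have -> : payoff (P j) u s = guaranteed ls.
  apply/esym/inf_attained; first by exists Q; rewrite (payoff_lift u s hQ).
  by move=> _ [Q' [hQ' ->]]; rewrite (payoff_lift u s hQ').
rewrite value_multiE; apply: ub_le_sup; last by exists ls.
exists (value (P j) u) => _ [s' [hs' ->]]; exact: guaranteed_le_value.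
Qed.

End Couplings.

Lemma sum_pair (T : finType) (V : nmodType) (F : T -> V) a b :
  a != b -> (forall t, t = a \/ t = b) -> \sum_t F t = F a + F b.
Proof.
move=> ab ab_only; rewrite (bigD1 a) //= (bigD1 b) 1?eq_sym //= big_pred0 ?addr0 //.
by move=> t; case: (ab_only t) => ->; rewrite eqxx ?andbF.
Qed.

Lemma ord2_cases (a b th : 'I_2) : a != b -> th = a \/ th = b.
Proof.
case: a b th => [[|[|//]] ?] [[|[|//]] ?] [[|[|//]] ?] //= _;
  by [left; apply/val_inj | right; apply/val_inj].
Qed.

Lemma ord2_split (th : 'I_2) : th = ord0 \/ th = ord_max.
Proof. exact: ord2_cases. Qed.

Section PositivePart.
Variable R : realType.
Variables (Th : finType) (d : Th -> R).

(** The expected positive part of the score y |-> sum_th d(th) E(y|th):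
    the gain from switching action optimally after observing y. *)
Definition posgain (Y : finType) (E : Th -> Y -> R) : R :=
  \sum_y Num.max 0 (\sum_th d th * E th y).

(** If d has a constant sign, the score has that sign too and the gain does
    not depend on the experiment. *)
Lemma posgain_const_sign (Y1 Y2 : finType) (E1 : Th -> Y1 -> R) (E2 : Th -> Y2 -> R) :
  (forall th, 0 <= d th) \/ (forall th, d th <= 0) ->
  experiment E1 -> experiment E2 -> posgain E1 = posgain E2.
Proof.
have posgain_nonneg (Y : finType) (E : Th -> Y -> R) : experiment E ->
    (forall th, 0 <= d th) -> posgain E = \sum_th d th.
  move=> hE d_ge0; rewrite /posgain (eq_bigr (fun y => \sum_th d th * E th y)).
    rewrite exchange_big; apply: eq_bigr => th _.
    by rewrite -mulr_sumr (proj2 (hE th)) mulr1.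
  move=> y _; rewrite max_r // sumr_ge0 // => th _.
  by rewrite mulr_ge0 // (proj1 (hE th)).
have posgain_nonpos (Y : finType) (E : Th -> Y -> R) : experiment E ->
    (forall th, d th <= 0) -> posgain E = 0.
  move=> hE d_le0; apply: big1 => y _; rewrite max_l //.
  by rewrite sumr_le0 // => th _; rewrite mulr_le0_ge0 // (proj1 (hE th)).
case=> hd hE1 hE2.
  by rewrite (posgain_nonneg _ _ hE1 hd) (posgain_nonneg _ _ hE2 hd).
by rewrite (posgain_nonpos _ _ hE1 hd) (posgain_nonpos _ _ hE2 hd).
Qed.

End PositivePart.

Section TwoActions.
Variable R : realType.
Variables (Th A : finType) (u : Th -> A -> R) (a0 a1 : A).
Hypothesis a01 : a0 != a1.
Hypothesis a0_or_a1 : forall a, a = a0 \/ a = a1.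

Let sum_actions (F : A -> R) : \sum_a F a = F a0 + F a1 := sum_pair F a01 a0_or_a1.

Definition switch_gain (th : Th) : R := u th a0 - u th a1.

Definition default_payoff : R := \sum_th u th a1.

Lemma payoff_two_actions (Y : finType) (E : Th -> Y -> R) sigma :
  experiment E -> strategy sigma -> payoff E u sigma =
  default_payoff + \sum_y sigma y a0 * \sum_th switch_gain th * E th y.
Proof.
move=> hE hs.
have split_term th y : E th y * mixed_u u th (sigma y) =
    u th a1 * E th y + sigma y a0 * (switch_gain th * E th y).
  have sigma_a1 : sigma y a1 = 1 - sigma y a0.
    by have [_] := hs y; rewrite sum_actions => <-; rewrite addrAC subrr add0r.
  by rewrite /mixed_u sum_actions sigma_a1 /switch_gain; ring.
rewrite /payoff (eq_bigr _ (fun th _ => eq_bigr _ (fun y _ => split_term th y))).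
under eq_bigr do rewrite big_split /=.
rewrite big_split /=; congr (_ + _).
  by apply: eq_bigr => th _; rewrite -mulr_sumr (proj2 (hE th)) mulr1.
by rewrite exchange_big /=; apply: eq_bigr => y _; rewrite mulr_sumr.
Qed.

Definition best_reply (Y : finType) (E : Th -> Y -> R) (y : Y) (a : A) : R :=
  if 0 < \sum_th switch_gain th * E th y then (a == a0)%:R else (a == a1)%:R.

Lemma best_reply_strategy (Y : finType) (E : Th -> Y -> R) : strategy (best_reply E).
Proof.
move=> y; split=> [a|]; first by rewrite /best_reply; case: ifP; rewrite ler0n.
have a10 : (a1 == a0) = false by rewrite eq_sym (negbTE a01).
rewrite sum_actions /best_reply.
by case: ifP => _; rewrite !eqxx ?(negbTE a01) ?a10 ?addr0 ?add0r.
Qed.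

Lemma value_two_actions (Y : finType) (E : Th -> Y -> R) :
  experiment E -> value E u = default_payoff + posgain switch_gain E.
Proof.
move=> hE; apply: sup_attained.
  exists (best_reply E); split; first exact: best_reply_strategy.
  rewrite payoff_two_actions //; last exact: best_reply_strategy.
  rewrite /posgain; congr (_ + _); apply: eq_bigr => y _.
  rewrite /best_reply eqxx (negbTE a01).
  by case: ltP => h; rewrite ?mul1r ?mul0r.
move=> _ [sigma [hs ->]]; rewrite payoff_two_actions // lerD2l /posgain.
apply: ler_sum => y _; set g := \sum_th _.
have s_ge0 := proj1 (hs y) a0; have s_le1 : sigma y a0 <= 1 by apply: dist_le1.
case: (leP 0 g) => hg; first by rewrite -[leRHS]mul1r ler_wpM2r.
by rewrite mulr_ge0_le0 // ltW.
Qed.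

End TwoActions.

Section BalancedCoupling.
Local Unset Implicit Arguments.
Variable R : realType.
Variables (m : nat) (Y : 'I_m -> finType).
Variable P : forall j : 'I_m, 'I_2 -> Y j -> R.
Hypothesis hP : forall j, experiment (P j).
Variable w : 'I_2 -> R.
Hypothesis w_gt0 : forall th, 0 < w th.

Let P_ge0 j th y : 0 <= P j th y := proj1 (hP j th) y.
Let P_mass j th : \sum_y P j th y = 1 := proj2 (hP j th).

Definition overlap (j : 'I_m) (y : Y j) : R :=
  Num.min (w ord0 * P j ord0 y) (w ord_max * P j ord_max y).

Definition overlap_mass (j : 'I_m) : R := \sum_y overlap j y.

Lemma overlap_ge0 j y : 0 <= overlap j y.
Proof. by rewrite le_min !mulr_ge0 ?P_ge0 ?ltW ?w_gt0. Qed.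

Lemma overlap_minE j y a b : a != b ->
  overlap j y = Num.min (w a * P j a y) (w b * P j b y).
Proof.
rewrite /overlap.
by case: (ord2_split a) => ->; case: (ord2_split b) => -> //= _; rewrite minC.
Qed.

Lemma overlap_mass_ge0 j : 0 <= overlap_mass j.
Proof. by apply: sumr_ge0 => y _; apply: overlap_ge0. Qed.

Lemma overlap_le j y th : overlap j y <= w th * P j th y.
Proof. by rewrite /overlap; case: (ord2_split th) => ->; rewrite ge_min lexx ?orbT. Qed.

Lemma overlap_mass_le j th : overlap_mass j <= w th.
Proof.
rewrite -[leRHS]mulr1 -(P_mass j th) mulr_sumr.
by apply: ler_sum => y _; apply: overlap_le.
Qed.

Lemma disagreement_overlap j a b : a != b ->
  \sum_y Num.max 0 (w a * P j a y - w b * P j b y) = w a - overlap_mass j.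
Proof.
move=> ab; have -> : w a - overlap_mass j = \sum_y (w a * P j a y - overlap j y).
  by rewrite sumrB -mulr_sumr P_mass mulr1.
apply: eq_bigr => y _; rewrite (overlap_minE j y a b ab).
case: (leP (w a * P j a y) (w b * P j b y)) => h.
  by rewrite max_l ?subrr // subr_le0.
by rewrite max_r // subr_ge0 ltW.
Qed.

(** The coupling is built around the experiment P_jstar of smallest overlap. *)
Variable jstar : 'I_m.
Hypothesis jstar_min : forall j, overlap_mass jstar <= overlap_mass j.
Let mstar := overlap_mass jstar.

Let mstar_ge0 : 0 <= mstar := overlap_mass_ge0 jstar.

Let w_sub_mstar_ge0 th : 0 <= w th - mstar.
Proof. by rewrite subr_ge0 overlap_mass_le. Qed.

Definition common_part (j : 'I_m) (y : Y j) : R :=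
  mstar / overlap_mass j * overlap j y.

Definition residual (th : 'I_2) (j : 'I_m) (y : Y j) : R :=
  w th * P j th y - common_part j y.

(** The common part is a nonnegative measure of mass mstar below the
    overlap (mstar <= overlap_mass j by the choice of jstar); hence the
    residuals are nonnegative measures of mass w_th - mstar. *)
Lemma common_part_ge0 j y : 0 <= common_part j y.
Proof. by rewrite mulr_ge0 ?overlap_ge0 ?divr_ge0 ?overlap_mass_ge0. Qed.

Lemma common_part_le j y : common_part j y <= overlap j y.
Proof.
rewrite -[leRHS]mul1r ler_wpM2r ?overlap_ge0 //.
have [->|nz] := eqVneq (overlap_mass j) 0; first by rewrite invr0 mulr0.
by rewrite ler_pdivrMr ?mul1r // lt_neqAle eq_sym nz overlap_mass_ge0.
Qed.

Lemma common_part_mass j : \sum_y common_part j y = mstar.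
Proof.
rewrite -mulr_sumr -/(overlap_mass j).
have [e|nz] := eqVneq (overlap_mass j) 0; last by rewrite divfK.
by rewrite e mulr0; apply/le_anti; rewrite mstar_ge0 -e jstar_min.
Qed.

Lemma residual_ge0 th j y : 0 <= residual th j y.
Proof. by rewrite subr_ge0 (le_trans (common_part_le j y) (overlap_le j y th)). Qed.

Lemma residual_mass th j : \sum_y residual th j y = w th - mstar.
Proof. by rewrite sumrB common_part_mass -mulr_sumr P_mass mulr1. Qed.

Definition balanced_coupling (th : 'I_2) (yy : prodY Y) : R :=
  (prod_measure mstar common_part yy
   + prod_measure (w th - mstar) (residual th) yy) / w th.

Lemma balanced_coupling_marginal th j t :
  \sum_(yy : prodY Y | yy j == t) balanced_coupling th yy = P j th t.
Proof.
rewrite -mulr_suml big_split /=.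
rewrite (prod_measure_marginal common_part_ge0 common_part_mass).
rewrite (prod_measure_marginal (residual_ge0 th) (residual_mass th)).
by rewrite /residual addrC subrK mulrC mulKf // lt0r_neq0.
Qed.

Lemma balanced_coupling_coupling : coupling P balanced_coupling.
Proof.
split=> [th|]; last exact: balanced_coupling_marginal.
split=> [yy|].
  apply: divr_ge0 (ltW (w_gt0 th)); apply: addr_ge0.
    exact: prod_measure_ge0 mstar_ge0 common_part_ge0 yy.
  exact: prod_measure_ge0 (w_sub_mstar_ge0 th) (residual_ge0 th) yy.
rewrite -mulr_suml big_split /= (prod_measure_mass common_part_mass).
by rewrite (prod_measure_mass (residual_mass th)) subrKC divff // lt0r_neq0.
Qed.

(** The disagreement of the balanced coupling is at most that of P_jstar:
    the common parts cancel and only the residual product of mass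
    w_a - mstar can contribute. *)
Lemma balanced_coupling_disagreement a b : a != b ->
  \sum_yy Num.max 0 (w a * balanced_coupling a yy - w b * balanced_coupling b yy)
  <= \sum_y Num.max 0 (w a * P jstar a y - w b * P jstar b y).
Proof.
move=> ab; rewrite disagreement_overlap // -/mstar.
rewrite -(prod_measure_mass (residual_mass a)).
apply: ler_sum => yy _; rewrite /balanced_coupling !(mulrC (w _)) !divfK ?lt0r_neq0 //.
have rb := prod_measure_ge0 (w_sub_mstar_ge0 b) (residual_ge0 b) yy.
rewrite ge_max (prod_measure_ge0 (w_sub_mstar_ge0 a) (residual_ge0 a)) /=.
lra.
Qed.

End BalancedCoupling.

Section ExistsCoupling.
Variable R : realType.
Variables (m : nat) (Y : 'I_m -> finType).
Variable P : forall j : 'I_m, 'I_2 -> Y j -> R.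
Arguments P : clear implicits.
Hypothesis hP : forall j, experiment (P j).
Hypothesis m_gt0 : (0 < m)%N.

Lemma exists_balanced_coupling (w : 'I_2 -> R) : (forall th, 0 < w th) ->
  exists Q (j : 'I_m), coupling P Q /\ forall a b, a != b ->
    \sum_yy Num.max 0 (w a * Q a yy - w b * Q b yy)
    <= \sum_y Num.max 0 (w a * P j a y - w b * P j b y).
Proof.
move=> w_gt0.
have [jstar _ jstar_min'] :=
  @arg_minP _ _ _ (Ordinal m_gt0) xpredT (overlap_mass _ _ _ P w) isT.
have jstar_min j := jstar_min' j isT.
exists (balanced_coupling _ _ _ P w jstar), jstar; split.
  exact: balanced_coupling_coupling _ _ _ _ hP _ w_gt0 _ jstar_min.
exact: balanced_coupling_disagreement _ _ _ _ hP _ w_gt0 _ jstar_min.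
Qed.

Lemma coupling_posgain_le (d : 'I_2 -> R) :
  exists Q (j : 'I_m), coupling P Q /\ posgain d Q <= posgain d (P j).
Proof.
have [const_sign|] := boolP ([forall th, 0 <= d th] || [forall th, d th <= 0]).
  have [Q [j [hQ _]]] := @exists_balanced_coupling (fun=> 1) (fun=> ltr01).
  exists Q, j; split=> //; rewrite (posgain_const_sign _ hQ.1 (hP j)) //.
  by case/orP: const_sign => /forallP; [left | right].
(* Otherwise d a < 0 < d b and the gain is the disagreement for w = |d|. *)
rewrite negb_or => /andP[/forallPn[a ha] /forallPn[b hb]].
rewrite -ltNge in ha; rewrite -ltNge in hb.
have ba : b != a by apply: contraTneq hb => ->; rewrite -leNgt ltW.
pose w th := `|d th|.
have w_gt0 th : 0 < w th.
  by rewrite normr_gt0; case: (ord2_cases th ba) => ->; rewrite ?(gt_eqF hb) ?(lt_eqF ha).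
have [Q [j [hQ hdis]]] := exists_balanced_coupling w_gt0.
have posgainE (Z : finType) (E : 'I_2 -> Z -> R) :
    posgain d E = \sum_y Num.max 0 (w b * E b y - w a * E a y).
  apply: eq_bigr => y _.
  rewrite (sum_pair _ ba (fun th => ord2_cases th ba)) /w.
  by rewrite gtr0_norm // ltr0_norm // mulNr opprK.
by exists Q, j; split=> //; rewrite !posgainE; exact: hdis.
Qed.

Lemma coupling_value_le (A : finType) (u : 'I_2 -> A -> R) : #|A| = 2%N ->
  exists Q (j : 'I_m), coupling P Q /\ value Q u <= value (P j) u.
Proof.
move=> hA; have [a0 [a1 [a01 setA]]] :
    exists a0 a1 : A, a0 != a1 /\ [set: A]%SET = [set a0; a1]%SET.
  by apply/cards2P; rewrite cardsT hA.
have a0_or_a1 a : a = a0 \/ a = a1.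
  by have := finset.in_setT a; rewrite setA in_set2 => /orP[] /eqP; [left | right].
have [Q [j [hQ hgain]]] := coupling_posgain_le (switch_gain u a0 a1).
exists Q, j; split=> //.
rewrite (value_two_actions u a01 a0_or_a1 hQ.1).
by rewrite (value_two_actions u a01 a0_or_a1 (hP j)) lerD2l.
Qed.

End ExistsCoupling.

Theorem theorem1 (R : realType) (A : finType) (u : 'I_2 -> A -> R)
  (m : nat) (Y : 'I_m -> finType) (P : forall j : 'I_m, 'I_2 -> Y j -> R)
  (Z : finType) (Pbar : 'I_2 -> Z -> R) :
  #|A| = 2%N -> (0 < m)%N ->
  (forall j, experiment (P j)) -> experiment Pbar ->
  blackwell_sup Pbar P ->
  value_multi P u = value Pbar u /\
  ((forall j, value (P j) u <= value Pbar u) /\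
   exists j, value (P j) u = value Pbar u).
Proof.
move=> hA m_gt0 hP _ [Pbar_above Pbar_least].
have A_gt0 : (0 < #|A|)%N by rewrite hA.
have P_le_Pbar j : value (P j) u <= value Pbar u := Pbar_above j A u A_gt0.
have [jmax _ jmax_max] :=
  @arg_maxP _ _ _ (Ordinal m_gt0) xpredT (fun j => value (P j) u) isT.
have [Q [j [hQ Q_le_Pj]]] := coupling_value_le hP m_gt0 u hA.
have Q_le_max : value Q u <= value (P jmax) u := le_trans Q_le_Pj (jmax_max j isT).
have Pbar_le_Q : value Pbar u <= value Q u.
  exact: Pbar_least _ Q hQ.1 (fun k => coupling_more_informative k hQ) A u A_gt0.
have Pbar_eq : value Pbar u = value (P jmax) u.
  by apply/le_anti; rewrite P_le_Pbar (le_trans Pbar_le_Q Q_le_max).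
split; first by rewrite Pbar_eq (value_multi_eq A_gt0 (hP jmax) hQ Q_le_max).
by split=> //; exists jmax.
Qed.
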